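(* Let $J\in\mathcal{D}(X)$ and, for each $x\in X$, let $\bar U(x)\subset U(x)$ be such that $(\bar TJ)(x)\le J(x)$ for all $x\in X$, where $(\bar TJ')(x)=\inf_{u\in\bar U(x)}\{g(x,u)+J'(f(x,u))\}$ for $J'\in\mathcal{E}^+(X)$. Then $\bar TJ\in\mathcal{D}(X)$.
   Context: Setting: $X$ (state space) and $U$ (control space) are sets; for each $x\in X$, $U(x)\subset U$ is nonempty; $f:X\times U\to X$; the stage cost $g$ satisfies $0\le g(x,u)\le\infty$ for all $x\in X$, $u\in U(x)$. $\mathcal{E}^+(X)$ denotes the set of all functions $J:X\to[0,\infty]$. The Bellman operator is $(TJ)(x)=\inf_{u\in U(x)}\{g(x,u)+J(f(x,u))\}$. The region of decreasing is $\mathcal{D}(X)=\{J\in\mathcal{E}^+(X): (TJ)(x)\le J(x)\ \forall x\in X\}$. Standing assumption: for every $J\in\mathcal{E}^+(X)$ and every $x\in X$, the infimum defining $(TJ)(x)$ is attained. *)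

From HB Require Import structures.
From mathcomp Require Import all_boot all_order all_algebra.
From mathcomp Require Import all_classical all_reals ereal.
Set Implicit Arguments. Unset Strict Implicit. Unset Printing Implicit Defensive.
Import Order.TTheory GRing.Theory Num.Theory.
Local Open Scope classical_set_scope.
Local Open Scope ereal_scope.

Definition Eplus (R : realType) (X : Type) (J : X -> \bar R) : Prop :=
  forall x, 0 <= J x.

(* Bellman-type operator with control constraint sets Uc :
   (T J)(x) = inf_{u in Uc x} { g(x,u) + J(f(x,u)) }  (inf of empty set = +oo) *)
Definition Bellman (R : realType) (X U : Type) (Uc : X -> set U)
  (g : X -> U -> \bar R) (f : X -> U -> X) (J : X -> \bar R) (x : X) : \bar R :=
  ereal_inf [set g x u + J (f x u) | u in Uc x].

Definition region_decreasing (R : realType) (X U : Type) (Uc : X -> set U)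
  (g : X -> U -> \bar R) (f : X -> U -> X) (J : X -> \bar R) : Prop :=
  Eplus J /\ forall x, Bellman Uc g f J x <= J x.

From HB Require Import structures.
From mathcomp Require Import all_boot all_order all_algebra.
From mathcomp Require Import all_classical all_reals ereal.
Import Order.TTheory GRing.Theory Num.Theory.
Local Open Scope classical_set_scope.
Local Open Scope ereal_scope.

(* Shrinking the constraint sets can only raise the Bellman operator, and the
   operator is monotone in J; hence T (Tbar J) <= Tbar (Tbar J) <= Tbar J. *)

Section BellmanOrder.
Variables (R : realType) (X U : Type) (g : X -> U -> \bar R) (f : X -> U -> X).

Lemma Bellman_ge0 (Uc : X -> set U) (J : X -> \bar R) :
  (forall x u, Uc x u -> 0 <= g x u) -> Eplus J -> Eplus (Bellman Uc g f J).
Proof.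
move=> g_ge0 J_ge0 x; apply: le_ereal_inf_tmp => _ [u Uxu <-].
by rewrite adde_ge0 // g_ge0.
Qed.

Lemma le_Bellman_subset (V W : X -> set U) (J : X -> \bar R) x :
  V x `<=` W x -> Bellman W g f J x <= Bellman V g f J x.
Proof. by move=> VW; apply/ereal_inf_le_tmp/image_subset. Qed.

Lemma le_Bellman (Uc : X -> set U) (J J' : X -> \bar R) x :
  (forall y, J y <= J' y) -> Bellman Uc g f J x <= Bellman Uc g f J' x.
Proof.
move=> JJ'; apply: le_ereal_inf_tmp => _ [u Uxu <-].
by apply: ge_ereal_inf; exists (g x u + J (f x u)); [exists u | rewrite leeD2l].
Qed.

End BellmanOrder.

Theorem proposition7 (R : realType) (X U : Type) (Uc : X -> set U)
  (f : X -> U -> X) (g : X -> U -> \bar R)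
  (HUne : forall x, Uc x !=set0)
  (Hg : forall x u, Uc x u -> 0 <= g x u)
  (Hattain : forall J : X -> \bar R, Eplus J -> forall x,
      exists2 u, Uc x u & Bellman Uc g f J x = g x u + J (f x u))
  (J : X -> \bar R) (HJ : region_decreasing Uc g f J)
  (Ubar : X -> set U) (HUbar : forall x, Ubar x `<=` Uc x)
  (HbarJ : forall x, Bellman Ubar g f J x <= J x) :
  region_decreasing Uc g f (Bellman Ubar g f J).
Proof.
have [J_ge0 _] := HJ.
split=> [|x].
  by apply: Bellman_ge0 J_ge0 => x u /HUbar; exact: Hg.
apply: (@le_trans _ _ (Bellman Ubar g f (Bellman Ubar g f J) x)).
  exact: le_Bellman_subset.
exact: le_Bellman.
Qed.
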